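(* Let $\sigma$ be a relational vocabulary, let $\mathscr{A}$ be a finite $\sigma$-structure with universe $A$, and let $k>0$. There is a bijective correspondence between (1) $\mathbb{E}_k$-coalgebras $\alpha : \mathscr{A} \to \mathbb{E}_k \mathscr{A}$, and (2) forest covers of the Gaifman graph $\mathcal{G}(\mathscr{A})$ of height $\leq k$.
   Context: A relational vocabulary $\sigma$ is a set of relation symbols $R$, each with an arity $n>0$. A $\sigma$-structure $\mathscr{A}$ consists of a universe $A$ and relations $R^{\mathscr{A}} \subseteq A^n$ for each $R\in\sigma$ of arity $n$. A homomorphism $f:\mathscr{A}\to\mathscr{B}$ is a function $f:A\to B$ with $(a_1,\dots,a_n)\in R^{\mathscr{A}} \Rightarrow (f(a_1),\dots,f(a_n))\in R^{\mathscr{B}}$; these form the category $\mathcal{R}(\sigma)$. The Ehrenfeucht–Fraïssé comonad $\mathbb{E}_k$ on $\mathcal{R}(\sigma)$: the universe of $\mathbb{E}_k\mathscr{A}$ is $A^{\leq k}$, the set of non-empty sequences of elements of $A$ of length $\leq k$. For $R\in\sigma$ of arity $n$, $R^{\mathbb{E}_k\mathscr{A}}$ is the set of tuples $(s_1,\dots,s_n)$ of such sequences which are pairwise comparable in the prefix order $\sqsubseteq$ and satisfy $R^{\mathscr{A}}(\varepsilon_{\mathscr{A}}(s_1),\dots,\varepsilon_{\mathscr{A}}(s_n))$, where the counit $\varepsilon_{\mathscr{A}}:\mathbb{E}_k\mathscr{A}\to\mathscr{A}$ sends $[a_1,\dots,a_n]$ to $a_n$. On a homomorphism $h$, $\mathbb{E}_k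 h[a_1,\dots,a_j]=[h(a_1),\dots,h(a_j)]$; the comultiplication $\delta_{\mathscr{A}}:\mathbb{E}_k\mathscr{A}\to\mathbb{E}_k\mathbb{E}_k\mathscr{A}$ sends $[a_1,\dots,a_j]$ to $[[a_1],[a_1,a_2],\dots,[a_1,\dots,a_j]]$. An $\mathbb{E}_k$-coalgebra on $\mathscr{A}$ is a homomorphism $\alpha:\mathscr{A}\to\mathbb{E}_k\mathscr{A}$ with $\delta_{\mathscr{A}}\circ\alpha=\mathbb{E}_k\alpha\circ\alpha$ and $\varepsilon_{\mathscr{A}}\circ\alpha=\mathrm{id}_{\mathscr{A}}$. The Gaifman graph $\mathcal{G}(\mathscr{A})=(A,\frown)$ has $a\frown a'$ iff for some $R\in\sigma$ and some $(a_1,\dots,a_n)\in R^{\mathscr{A}}$, $a=a_i$, $a'=a_j$ with $i\neq j$. In a poset, $x\uparrow y$ means $x\leq y$ or $y\leq x$; a chain is a subset whose elements are pairwise comparable. A forest is a poset $(F,\leq)$ in which the set of predecessors of every element is a finite chain; its height is $\sup_C|C|$ over chains $C$. A forest cover of a graph $G=(V,\frown)$ is a forest $(F,\leq)$ with $V\subseteq F$ such that $v\frown v'$ implies $v\uparrow v'$. *)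

From mathcomp Require Import all_boot zify.
Set Implicit Arguments. Unset Strict Implicit. Unset Printing Implicit Defensive.

Record vocab := Vocab {
  sym :> Type;
  ar : sym -> nat;
  ar_gt0 : forall R, 0 < ar R }.

Definition structure (s : vocab) (T : Type) := forall R : s, (ar R).-tuple T -> Prop.

Definition is_hom (s : vocab) (T U : Type) (A : structure s T) (B : structure s U)
  (f : T -> U) : Prop :=
  forall (R : s) (t : (ar R).-tuple T), A R t -> B R (map_tuple f t).

Definition Ek (T : Type) (k : nat) := {x : seq T | 0 < size x <= k}.

Definition seq_prefix (T : Type) (s t : seq T) : Prop := exists u, t = s ++ u.
Definition seq_comparable (T : Type) (s t : seq T) : Prop :=
  seq_prefix s t \/ seq_prefix t s.

Lemma false_neq_true : false <> true. Proof. by []. Qed.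

Definition eps (T : Type) (k : nat) (s : Ek T k) : T :=
  match s with
  | exist l h =>
    match l return (0 < size l <= k) -> T with
    | [::] => fun h => False_rect T (false_neq_true h)
    | x :: l' => fun _ => last x l'
    end h
  end.

Definition Ekmap (T U : Type) (k : nat) (h : T -> U) (s : Ek T k) : Ek U k :=
  exist _ (map h (sval s)) (eq_ind_r (fun n => 0 < n <= k) (proj2_sig s) (size_map h (sval s))).

Definition prefixes (T : Type) (s : seq T) : seq (seq T) :=
  [seq take i s | i <- iota 1 (size s)].

Lemma size_pmap_prefixes (T : Type) (k : nat) (s : Ek T k) :
  0 < size (pmap (insub : seq T -> option (Ek T k)) (prefixes (sval s))) <= k.
Proof.
case: s => l /= /andP [l0 lk].
rewrite size_pmap_sub.
have -> : count (fun x : seq T => 0 < size x <= k) (prefixes l) = size l.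
  rewrite /prefixes count_map.
  rewrite -[RHS](size_iota 1); apply/eqP; rewrite -all_count; apply/allP => i.
  rewrite mem_iota => /andP [i1 il]; rewrite /= size_take.
  rewrite add1n ltnS in il.
  by case: (ltnP i (size l)) => _; lia.
by rewrite l0 lk.
Qed.

Definition delta (T : Type) (k : nat) (s : Ek T k) : Ek (Ek T k) k :=
  exist _ (pmap insub (prefixes (sval s))) (size_pmap_prefixes s).

Definition Ek_struct (s : vocab) (T : Type) (A : structure s T) (k : nat)
  : structure s (Ek T k) :=
  fun R t =>
    (forall i j : 'I_(ar R), seq_comparable (sval (tnth t i)) (sval (tnth t j)))
    /\ A R (map_tuple (@eps T k) t).

Arguments Ek_struct {s T} A k.

Definition Ek_coalgebra (s : vocab) (T : Type) (A : structure s T) (k : nat)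
  (alpha : T -> Ek T k) : Prop :=
  [/\ is_hom A (Ek_struct A k) alpha,
      (forall a, delta (alpha a) = Ekmap alpha (alpha a)) &
      (forall a, eps (alpha a) = a)].

Definition gaifman_adj (s : vocab) (T : Type) (A : structure s T) (a a' : T) : Prop :=
  exists (R : s) (t : (ar R).-tuple T) (i j : 'I_(ar R)),
    [/\ A R t, i != j, a = tnth t i & a' = tnth t j].

Definition is_forest (T : finType) (le : rel T) : Prop :=
  [/\ reflexive le, antisymmetric le, transitive le,
      (forall x, exists l : seq T, forall y, le y x -> y \in l) &
      (forall x y z, le y x -> le z x -> le y z || le z y)].

Definition is_chain (T : finType) (le : rel T) (C : {set T}) : Prop :=
  forall x y, x \in C -> y \in C -> le x y || le y x.

Definition height_le (T : finType) (le : rel T) (k : nat) : Prop :=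
  forall C : {set T}, is_chain le C -> #|C| <= k.

Definition forest_cover (s : vocab) (T : finType) (A : structure s T) (le : rel T) : Prop :=
  is_forest le /\ (forall a a', gaifman_adj A a a' -> le a a' || le a' a).

From mathcomp Require Import all_boot.
From Stdlib Require Import ProofIrrelevance FunctionalExtensionality.
Set Implicit Arguments. Unset Strict Implicit. Unset Printing Implicit Defensive.

(* A coalgebra sends a to the chain [a_1; ...; a_n] ending in a, and the
   comultiplication law says exactly that alpha (a_i) is the prefix of length i
   of alpha a.  Hence the prefix order on the values of alpha is a forest order
   on A whose chains have at most k elements, in which the elements of alpha a
   are the predecessors of a, listed in increasing order; the homomorphism
   condition says that Gaifman neighbours are comparable.  Conversely a forest
   cover sends a to the sorted list of its predecessors.  The two constructions
   are inverse because a duplicate-free sorted list is determined by its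
   elements. *)

Section Prefixes.
Variable T : Type.
Implicit Types (s : seq T) (f : T -> seq T).

Lemma size_prefixes s : size (prefixes s) = size s.
Proof. by rewrite size_map size_iota. Qed.

Lemma nth_prefixes s t i : i < size s -> nth t (prefixes s) i = take i.+1 s.
Proof. by move=> lt_i_s; rewrite (nth_map 0) ?size_iota // nth_iota. Qed.

Lemma map_eq_prefixesP f s x :
  map f s = prefixes s <-> forall i, i < size s -> f (nth x s i) = take i.+1 s.
Proof.
split=> [eq_fs i lt_i_s | nth_fs].
  by rewrite -(nth_map x [::]) // eq_fs nth_prefixes.
apply: (@eq_from_nth _ [::]) => [|i]; rewrite size_map ?size_prefixes // => lt_i_s.
by rewrite (nth_map x) // nth_prefixes // nth_fs.
Qed.

End Prefixes.

Section PrefixOrder.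
Variable T : eqType.
Implicit Types s t u : seq T.

Lemma uniq_prefixes s : uniq (prefixes s).
Proof.
rewrite map_inj_in_uniq ?iota_uniq // => i j; rewrite !mem_iota !add1n !ltnS.
by case/andP=> _ le_i_s /andP[_ le_j_s] /(congr1 size); rewrite !size_takel.
Qed.

Lemma prefix_anti : antisymmetric (@prefix T).
Proof. by move=> s t /andP[/prefixW/infixW st /prefixW/infixW ts]; apply/subseq_anti/andP. Qed.

Lemma prefix_size_eq s t : prefix s t -> size s = size t -> s = t.
Proof. by rewrite prefixE => /eqP st eq_size; rewrite -st eq_size take_size. Qed.

Lemma prefix_total s t u : prefix s u -> prefix t u -> prefix s t || prefix t s.
Proof.
wlog le_st : s t / size s <= size t => [wlog_st|].
  case: (leqP (size s) (size t)) => [le_st|/ltnW le_ts] su tu; first exact: wlog_st.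
  by rewrite orbC wlog_st.
rewrite !prefixE => /eqP su /eqP tu; apply/orP; left.
by rewrite -[t in take _ t]tu take_takel // su.
Qed.

End PrefixOrder.

Section CounitComultiplication.
Variables (T : Type) (k : nat).

Lemma eps_last (s : Ek T k) x : eps s = last x (val s).
Proof. by case: s => [[|y l] h]. Qed.

Lemma val_delta (s : Ek T k) : map val (val (delta s)) = prefixes (val s).
Proof.
rewrite /= (pmap_filter (@insubK _ _ _)) (eq_filter (isSome_insub _)).
apply/all_filterP; rewrite /prefixes all_map; apply/allP => i /=.
rewrite mem_iota add1n ltnS => /andP[gt0_i le_i_s].
by case/andP: (valP s) => _ le_s_k; rewrite size_takel // gt0_i (leq_trans le_i_s).
Qed.

Lemma delta_eq_EkmapP (f : T -> Ek T k) (s : Ek T k) :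
  delta s = Ekmap f s <-> map (val \o f) (val s) = prefixes (val s).
Proof.
rewrite -val_delta map_comp; split=> [-> // | eq_vals].
exact/val_inj/(inj_map val_inj).
Qed.

End CounitComultiplication.

Definition coalgebra_order (T : eqType) (k : nat) (alpha : T -> Ek T k) : rel T :=
  fun a b => prefix (val (alpha a)) (val (alpha b)).

Definition ancestors (T : finType) (le : rel T) (a : T) : seq T :=
  sort le (enum [set b | le b a]).

Section Ancestors.
Variables (T : finType) (le : rel T).
Hypothesis leF : is_forest le.

Lemma mem_ancestors a b : (b \in ancestors le a) = le b a.
Proof. by rewrite mem_sort mem_enum inE. Qed.

Lemma ancestors_self a : a \in ancestors le a.
Proof. by case: leF => le_refl _ _ _ _; rewrite mem_ancestors le_refl. Qed.

Lemma ancestors_uniq a : uniq (ancestors le a).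
Proof. by rewrite sort_uniq enum_uniq. Qed.

Lemma ancestors_sorted a : sorted le (ancestors le a).
Proof.
case: leF => _ _ _ _ le_chain.
apply: (sort_sorted_in (P := [pred b | le b a])).
  by move=> b c b_le_a c_le_a; apply: le_chain b_le_a c_le_a.
by apply/allP => b /=; rewrite mem_enum inE.
Qed.

Lemma sorted_eq_ancestors a t :
  sorted le t -> uniq t -> (forall b, (b \in t) = le b a) -> t = ancestors le a.
Proof.
case: leF => _ le_anti le_trans _ _ sorted_t uniq_t mem_t.
apply: (sorted_eq le_trans le_anti sorted_t (ancestors_sorted a)).
by apply: uniq_perm => // [|b]; rewrite ?ancestors_uniq // mem_t mem_ancestors.
Qed.

Lemma ancestors_cat a t b u : ancestors le a = t ++ b :: u -> ancestors le b = rcons t b.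
Proof.
case: (leF) => le_refl le_anti le_trans _ _ def_a.
have sorted_a := ancestors_sorted a; have uniq_a := ancestors_uniq a.
rewrite def_a -cat_rcons in sorted_a uniq_a.
have b_le_a : le b a by rewrite -mem_ancestors def_a mem_cat mem_head orbT.
move: (sorted_a); rewrite (sorted_pairwise le_trans) pairwise_cat pairwise_rcons.
case/and3P=> /allrelP tb_le_u /andP[t_le_b _] _.
symmetry; apply: sorted_eq_ancestors => [||c].
- exact: (subseq_sorted le_trans (prefix_subseq _ _) sorted_a).
- by move: uniq_a; rewrite cat_uniq => /andP[].
apply/idP/idP => [|c_le_b].
  by rewrite mem_rcons inE => /predU1P[-> | /(allP t_le_b)] //; apply: le_refl.
have : c \in ancestors le a by rewrite mem_ancestors (le_trans _ _ _ c_le_b b_le_a).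
rewrite def_a -cat_rcons mem_cat => /orP[// | c_u].
have b_le_c : le b c by apply: tb_le_u; rewrite ?mem_rcons ?mem_head.
have -> : c = b by apply: le_anti; rewrite c_le_b b_le_c.
by rewrite mem_rcons mem_head.
Qed.

Lemma last_ancestors a x : last x (ancestors le a) = a.
Proof.
have [t [u def_a]] : exists t u, ancestors le a = t ++ a :: u.
  by case/splitPr: (ancestors_self a) => t u; exists t, u.
by rewrite (ancestors_cat def_a) last_rcons.
Qed.

Lemma ancestors_nth a x i : i < size (ancestors le a) ->
  ancestors le (nth x (ancestors le a) i) = take i.+1 (ancestors le a).
Proof.
move=> lt_i; rewrite (take_nth x lt_i).
by apply: (ancestors_cat (u := drop i.+1 (ancestors le a))); rewrite -drop_nth // cat_take_drop.
Qed.

Lemma prefix_ancestors a b : prefix (ancestors le a) (ancestors le b) = le a b.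
Proof.
apply/idP/idP => [/prefixP[u def_b] | le_ab].
  by rewrite -mem_ancestors def_b mem_cat ancestors_self.
have a_in_b : a \in ancestors le b by rewrite mem_ancestors.
have [t [u def_b]] : exists t u, ancestors le b = t ++ a :: u.
  by case/splitPr: a_in_b => t u; exists t, u.
by rewrite def_b -cat_rcons -(ancestors_cat def_b) prefix_prefix.
Qed.

Lemma size_ancestors k : height_le le k -> forall a, 0 < size (ancestors le a) <= k.
Proof.
move=> leH a; apply/andP; split.
  by have := ancestors_self a; case: (ancestors le a).
rewrite size_sort -cardE; apply: leH => b c; rewrite !inE.
by case: leF => _ _ _ _; apply.
Qed.

End Ancestors.

Definition ancestor_map (T : finType) (le : rel T) (k : nat)
    (leF : is_forest le) (leH : height_le le k) (a : T) : Ek T k :=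
  exist _ (ancestors le a) (size_ancestors leF leH a).

Section AncestorCoalgebra.
Variables (s : vocab) (T : finType) (A : structure s T) (k : nat) (le : rel T).
Hypotheses (leC : forest_cover A le) (leH : height_le le k).
Local Notation alpha := (ancestor_map leC.1 leH).

Lemma eps_ancestor_map a : eps (alpha a) = a.
Proof. by rewrite (eps_last _ a) (last_ancestors leC.1). Qed.

Lemma ancestor_map_coalgebra : Ek_coalgebra A alpha.
Proof.
split=> [R t At | a | ]; last exact: eps_ancestor_map.
- split; last first.
    suff -> : map_tuple (@eps T k) (map_tuple alpha t) = t by [].
    by apply: eq_from_tnth => i; rewrite !tnth_map eps_ancestor_map.
  move=> i j; rewrite !tnth_map /=.
  have [-> | neq_ij] := eqVneq i j; first by left; exists [::]; rewrite cats0.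
  have /orP[le_ij | le_ji] : le (tnth t i) (tnth t j) || le (tnth t j) (tnth t i).
    by apply: leC.2; exists R, t, i, j.
  + by left; apply/prefixP; rewrite (prefix_ancestors leC.1).
  + by right; apply/prefixP; rewrite (prefix_ancestors leC.1).
- apply/delta_eq_EkmapP/(map_eq_prefixesP _ _ a) => i lt_i.
  exact: (ancestors_nth leC.1).
Qed.

Lemma coalgebra_order_ancestor_map : coalgebra_order alpha =2 le.
Proof. exact: (prefix_ancestors leC.1). Qed.

End AncestorCoalgebra.

Section CoalgebraForest.
Variables (s : vocab) (T : finType) (A : structure s T) (k : nat) (alpha : T -> Ek T k).
Hypothesis alphaP : Ek_coalgebra A alpha.
Local Notation le := (coalgebra_order alpha).

Lemma last_coalgebra a x : last x (val (alpha a)) = a.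
Proof. by case: alphaP => _ _ /(_ a); rewrite (eps_last _ x). Qed.

Lemma coalgebra_self a : a \in val (alpha a).
Proof.
case def_a: (val (alpha a)) (valP (alpha a)) => [// | x l] _.
by rewrite -(last_coalgebra a x) def_a last_cons mem_last.
Qed.

Lemma coalgebra_val_inj : injective (fun a => val (alpha a)).
Proof. by move=> a b eq_ab; rewrite -(last_coalgebra a a) eq_ab last_coalgebra. Qed.

Lemma coalgebra_prefixes a :
  map (fun b => val (alpha b)) (val (alpha a)) = prefixes (val (alpha a)).
Proof. by case: alphaP => _ /(_ a) /delta_eq_EkmapP. Qed.

Lemma coalgebra_uniq a : uniq (val (alpha a)).
Proof. by have := uniq_prefixes (val (alpha a)); rewrite -coalgebra_prefixes => /map_uniq. Qed.

Lemma coalgebra_sorted a : sorted le (val (alpha a)).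
Proof.
have /(map_eq_prefixesP _ _ a) nth_alpha := coalgebra_prefixes a.
apply/(sortedP a) => i lt_i1; rewrite /coalgebra_order !nth_alpha ?(ltnW lt_i1) //.
by rewrite -(take_takel _ (leqnSn i.+1)) prefix_take.
Qed.

Lemma mem_coalgebra a b : (b \in val (alpha a)) = le b a.
Proof.
apply/idP/idP => [b_in_a | /prefixP[u ->]]; last by rewrite mem_cat coalgebra_self.
have /(map_eq_prefixesP _ _ b) nth_alpha := coalgebra_prefixes a.
by rewrite /coalgebra_order -{1}(nth_index b b_in_a) nth_alpha ?index_mem ?prefix_take.
Qed.

Lemma coalgebra_order_forest : is_forest le.
Proof.
split.
- by move=> a; apply: prefix_refl.
- by move=> a b /prefix_anti /coalgebra_val_inj.
- by move=> b a c; apply: prefix_trans.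
- by move=> a; exists (enum T) => b _; rewrite mem_enum.
- by move=> a b c; apply: prefix_total.
Qed.

Lemma coalgebra_order_cover : forest_cover A le.
Proof.
split; first exact: coalgebra_order_forest.
move=> _ _ [R [t [i [j [At _ -> ->]]]]].
case: alphaP => /(_ R t At) [/(_ i j) + _] _ _; rewrite !tnth_map.
by case=> /prefixP le_ij; apply/orP; [left | right].
Qed.

Lemma coalgebra_order_height : height_le le k.
Proof.
move=> C chainC; rewrite cardE.
pose depth a := size (val (alpha a)).
have depth_inj : {in enum C &, injective depth}.
  move=> a b; rewrite !mem_enum => aC bC eq_ab; apply: coalgebra_val_inj.
  case/orP: (chainC a b aC bC) => /prefix_size_eq; first exact.
  by move/(_ (esym eq_ab)) ->.
rewrite -(size_map depth) -(size_iota 1 k); apply: uniq_leq_size.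
  by rewrite map_inj_in_uniq ?enum_uniq.
by move=> _ /mapP[a _ ->]; rewrite mem_iota add1n ltnS; apply: (valP (alpha a)).
Qed.

Lemma ancestors_coalgebra_order a : ancestors le a = val (alpha a).
Proof.
apply/esym/sorted_eq_ancestors; first exact: coalgebra_order_forest.
- exact: coalgebra_sorted.
- exact: coalgebra_uniq.
- exact: mem_coalgebra.
Qed.

End CoalgebraForest.

Theorem theorem4 (s : vocab) (T : finType) (A : structure s T) (k : nat) (hk : 0 < k) :
  exists f : {alpha : T -> Ek T k | Ek_coalgebra A alpha} ->
             {le : rel T | forest_cover A le /\ height_le le k},
    bijective f.
Proof.
pose forest_of (x : {alpha : T -> Ek T k | Ek_coalgebra A alpha}) :
    {le : rel T | forest_cover A le /\ height_le le k} :=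
  exist _ _ (conj (coalgebra_order_cover (svalP x)) (coalgebra_order_height (svalP x))).
pose coalgebra_of (y : {le : rel T | forest_cover A le /\ height_le le k}) :
    {alpha : T -> Ek T k | Ek_coalgebra A alpha} :=
  exist _ _ (ancestor_map_coalgebra (svalP y).1 (svalP y).2).
exists forest_of, coalgebra_of => [[alpha alphaP] | [le ?]];
  apply: (eq_sig_hprop (fun _ => proof_irrelevance _)) => /=.
- by apply: functional_extensionality => a; apply/val_inj/(ancestors_coalgebra_order alphaP).
- by do 2 apply: functional_extensionality => ?; apply: coalgebra_order_ancestor_map.
Qed.
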